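(* Let $F$ be any algebraically closed field and let $G_F$ be the group of polynomial automorphisms of the affine space $\mathbb{A}^3_F$ generated by the three maps $m_1(x,y,z)=(yz-x,y,z)$, $m_2(x,y,z)=(x,xz-y,z)$, $m_3(x,y,z)=(x,y,xy-z)$. Then the homomorphism from the free product $\mathbb{Z}/2*\mathbb{Z}/2*\mathbb{Z}/2$ to $G_F$ sending the generator of the $i$-th factor to $m_i$ is an isomorphism; i.e. $G_F\cong\mathbb{Z}/2*\mathbb{Z}/2*\mathbb{Z}/2$, the only relations among $m_1,m_2,m_3$ being $m_i^2=1$.
   Context: Each $m_i$ is a polynomial involution of $F^3$ (with integer coefficients). *)

From HB Require Import structures.
From mathcomp Require Import all_boot all_order all_algebra.
Set Implicit Arguments. Unset Strict Implicit. Unset Printing Implicit Defensive.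
Import GRing.Theory.
Local Open Scope ring_scope.

Definition pt3 (F : Type) := (F * F * F)%type.

(* The three Markov-type involutions m_1, m_2, m_3 (indexed by 'I_3 = {0,1,2}). *)
Definition markov_inv (F : comNzRingType) (i : 'I_3) (p : pt3 F) : pt3 F :=
  let: (x, y, z) := p in
  match val i with
  | 0%N => (y * z - x, y, z)
  | 1%N => (x, x * z - y, z)
  | _ => (x, y, x * y - z)
  end.

Definition word_map (F : comNzRingType) (w : seq 'I_3) : pt3 F -> pt3 F :=
  foldr (fun i f => markov_inv i \o f) id w.

(* A word is reduced (normal form in Z/2*Z/2*Z/2) if no two consecutive letters agree. *)
Definition reduced_word (w : seq 'I_3) : bool := sorted (fun i j : 'I_3 => i != j) w.

(* Evaluate a reduced word on the generic point (X, X, X) of F[X]^3.  If all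
   degrees are positive and some coordinate other than the i-th has the
   largest degree, then the new i-th coordinate of m_i (yz - x for m_1) has
   degree deg y + deg z, which exceeds all three old degrees; so m_i makes the
   i-th coordinate the one of largest degree.  Hence a nonempty reduced word
   moves (X, X, X), and since F is infinite it moves some point (t, t, t). *)

From HB Require Import structures.
From mathcomp Require Import all_boot all_order all_algebra.
From mathcomp Require Import zify ring.
Set Implicit Arguments. Unset Strict Implicit. Unset Printing Implicit Defensive.
Import GRing.Theory.
Local Open Scope ring_scope.

Lemma markov_invK (R : comNzRingType) (i : 'I_3) : involutive (@markov_inv R i).
Proof.
by move=> [[x y] z]; case: i => [[|[|[|k]]] ?] //=; congr (_, _, _); ring.
Qed.

Definition map_pt3 (R S : Type) (f : R -> S) (p : pt3 R) : pt3 S :=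
  let: (x, y, z) := p in (f x, f y, f z).

Section RMorphism.
Variables (R S : comNzRingType) (f : {rmorphism R -> S}).

Lemma markov_inv_map (i : 'I_3) (p : pt3 R) :
  markov_inv i (map_pt3 f p) = map_pt3 f (markov_inv i p).
Proof.
by case: p => [[x y] z]; case: i => [[|[|[|k]]] ?] //=; rewrite rmorphB rmorphM.
Qed.

Lemma word_map_map (w : seq 'I_3) (p : pt3 R) :
  word_map w (map_pt3 f p) = map_pt3 f (word_map w p).
Proof. by elim: w => //= i w IHw; rewrite IHw markov_inv_map. Qed.

End RMorphism.

Section DegreeGrowth.
Variable R : idomainType.
Implicit Types (x y z : {poly R}) (p : pt3 {poly R}).

Lemma size_mulB x y z : (1 < size y)%N -> (1 < size z)%N ->
  (size x < size y + size z - 1)%N -> size (y * z - x) = (size y + size z - 1)%N.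
Proof.
move=> y_gt1 z_gt1 x_lt.
have y_neq0 : y != 0 by rewrite -size_poly_eq0; lia.
have z_neq0 : z != 0 by rewrite -size_poly_eq0; lia.
by rewrite size_polyDl ?size_mul ?size_polyN -?subn1.
Qed.

Definition dominant (i : 'I_3) p : Prop :=
  let: (a, b, c) := p in
  [/\ (1 < size a)%N, (1 < size b)%N, (1 < size c)%N &
  match val i with
  | 0%N => (size b < size a)%N /\ (size c < size a)%N
  | 1%N => (size a < size b)%N /\ (size c < size b)%N
  | _ => (size a < size c)%N /\ (size b < size c)%N
  end].

Definition Xpt : pt3 {poly R} := ('X, 'X, 'X).

Lemma dominant_markov_inv_Xpt (i : 'I_3) : dominant i (markov_inv i Xpt).
Proof.
have sizeX : size ('X : {poly R}) = 2%N by rewrite size_polyX.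
by case: i => [[|[|[|k]]] ?] //=; rewrite size_mulB ?sizeX.
Qed.

Lemma dominant_markov_inv (i j : 'I_3) p :
  dominant j p -> j != i -> dominant i (markov_inv i p).
Proof.
case: p => [[a b] c].
(* [/=] normalises the carrier type inside the [size] atoms produced by
   [size_mulB] to the one in the hypotheses; [lia] compares atoms syntactically. *)
case: i => [[|[|[|k]]] ?] //; case: j => [[|[|[|l]]] ?] //= [? ? ? [? ?]] _;
  rewrite size_mulB /=; do ?split; lia.
Qed.

Lemma dominant_word (i : 'I_3) (w : seq 'I_3) :
  reduced_word (i :: w) -> dominant i (word_map (i :: w) Xpt).
Proof.
elim: w i => [|j w IHw] i; first by move=> _; apply: dominant_markov_inv_Xpt.
rewrite /reduced_word /= => /andP[i_neq_j red_w].
by apply: (dominant_markov_inv (IHw j red_w)); rewrite eq_sym.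
Qed.

Lemma dominant_neq_Xpt (i : 'I_3) p : dominant i p -> p <> Xpt.
Proof.
move=> dom_p p_eq; move: dom_p; rewrite p_eq.
by case: i => [[|[|[|k]]] ?] //= [_ _ _ []]; rewrite ltnn.
Qed.

End DegreeGrowth.

Lemma horner_separates (F : closedFieldType) (u v : {poly F}) :
  u != v -> exists t, u.[t] != v.[t].
Proof.
rewrite -subr_eq0 => /closed_nonrootP[t].
by rewrite rootE hornerD hornerN subr_eq0; exists t.
Qed.

Lemma map_pt3_horner_separates (F : closedFieldType) (p q : pt3 {poly F}) :
  p <> q -> exists t, map_pt3 (horner_eval t) p <> map_pt3 (horner_eval t) q.
Proof.
case: p q => [[a b] c] [[a' b'] c'].
have [<-|/horner_separates[t neq]] := eqVneq a a'; last first.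
  by move=> _; exists t => -[/eqP]; rewrite !horner_evalE (negbTE neq).
have [<-|/horner_separates[t neq]] := eqVneq b b'; last first.
  by move=> _; exists t => -[/eqP]; rewrite !horner_evalE (negbTE neq).
have [<-|/horner_separates[t neq]] := eqVneq c c'; last first.
  by move=> _; exists t => -[/eqP]; rewrite !horner_evalE (negbTE neq).
by move=> /(_ erefl).
Qed.

Theorem proposition1p5 (F : closedFieldType) :
  (forall i : 'I_3, forall p : pt3 F, markov_inv i (markov_inv i p) = p) /\
  (forall w : seq 'I_3, reduced_word w -> w != [::] ->
     exists p : pt3 F, word_map w p <> p).
Proof.
split=> [i|]; first exact: markov_invK.
case=> [|i w] // red_w _.
have [t moved] :=
  map_pt3_horner_separates (dominant_neq_Xpt (dominant_word F red_w)).
by exists (map_pt3 (horner_eval t) (Xpt F)); rewrite word_map_map.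
Qed.
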